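(* Let $0\leq m\leq M$ be integers, $p\in(0,1)$, and define for $n\in\mathbb{N}$ $$f_{S,d}(n)=2n\sum_{k=m}^{M}\binom{n-1}{k}p^k(1-p)^{n-1-k}$$ (with $f_{S,d}(0)=0$). Then $f_{S,d}$ is non-decreasing on the integers of $\left[0,\frac{m+1}{p}-1\right]$ and non-increasing on the integers of $\left[\frac{M+1}{p}-1,+\infty\right)$.
   Context: Here $S=[m,M]$, $d$ is a distance threshold, and $p=p(d)\in(0,1)$ is the probability that two distinct uniformly random points of the unit torus are at distance at most $d$ (equal to $\pi d^2$ for $d\leq\frac12$). Binomial coefficients follow the convention $\binom{a}{k}=0$ for $k>a\geq0$. The quantity $f_{S,d}(n)$ is the expected order at the next step of the redistributed model when the current order is $n$. *)

From mathcomp Require Import all_boot all_order all_algebra.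
Set Implicit Arguments. Unset Strict Implicit. Unset Printing Implicit Defensive.
Import Order.TTheory GRing.Theory Num.Theory.
Local Open Scope ring_scope.

(* f_{S,d}(n) = 2n * sum_{k=m}^{M} C(n-1,k) p^k (1-p)^(n-1-k), with f(0) = 0.
   For n >= 1, 'C(n.-1, k) = 0 when k > n-1, matching the paper's convention. *)
Definition f_Sd (R : realFieldType) (m M : nat) (p : R) (n : nat) : R :=
  if n is 0 then 0 else
  2 * n%:R * \sum_(m <= k < M.+1) ('C(n.-1, k))%:R * p ^+ k * (1 - p) ^+ (n.-1 - k).

(* With b(n,i) = C(n,i) p^i (1-p)^(n-i), the identity n C(n-1,k) = (k+1) C(n,k+1) turns f(n)
   into (2/p) h(n), where h(n) = sum_{k=m}^{M} (k+1) b(n,k+1) is a truncated binomial mean.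
   Pascal's rule gives h(n+1) - h(n) = p sum_k (k+1) (b(n,k) - b(n,k+1)), and the ratio
   (k+1)(1-p) b(n,k+1) = (n-k) p b(n,k) shows that b(n,.) increases up to k+1 = (n+1)p and
   decreases afterwards.  So every summand is >= 0 while (n+1)p <= m+1 and <= 0 once
   (n+1)p >= M+1. *)

From mathcomp Require Import all_boot all_order all_algebra.
From mathcomp Require Import ring lra.
Import Order.TTheory GRing.Theory Num.Theory.
Local Open Scope ring_scope.
Set Implicit Arguments. Unset Strict Implicit.

Section BinomialTerm.
Variables (R : comPzRingType) (p : R).

Definition binom_term (n i : nat) : R := 'C(n, i)%:R * p ^+ i * (1 - p) ^+ (n - i).

Lemma binom_termSS n i :
  binom_term n.+1 i.+1 = p * binom_term n i + (1 - p) * binom_term n i.+1.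
Proof.
rewrite /binom_term binS natrD subSS.
have [lt_in | le_ni] := ltnP i n.
  by rewrite -(subnSK lt_in) !exprS; ring.
by rewrite (bin_small (n := n) (m := i.+1)) ?ltnS // (eqnP le_ni) exprS; ring.
Qed.

Lemma binom_term_ratio n i :
  (i.+1)%:R * (1 - p) * binom_term n i.+1 = (n%:R - i%:R) * p * binom_term n i.
Proof.
rewrite /binom_term; have [lt_in | le_ni] := ltnP i n.
  have bin_ratio : (i.+1)%:R * 'C(n, i.+1)%:R = (n%:R - i%:R) * 'C(n, i)%:R :> R.
    by rewrite -natrM mul_bin_left natrM natrB ?(ltnW lt_in).
  rewrite -(subnSK lt_in) !exprS.
  transitivity ((i.+1)%:R * 'C(n, i.+1)%:R * (p * p ^+ i) * ((1 - p) * (1 - p) ^+ (n - i.+1))).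
    by ring.
  by rewrite bin_ratio; ring.
rewrite (bin_small (n := n) (m := i.+1)) ?ltnS //.
move: le_ni; rewrite leq_eqVlt => /predU1P[-> | lt_ni]; first by rewrite subrr; ring.
by rewrite bin_small //; ring.
Qed.

Lemma binom_term_diff n i :
  (i.+1)%:R * (1 - p) * (binom_term n i.+1 - binom_term n i)
  = ((n.+1)%:R * p - (i.+1)%:R) * binom_term n i.
Proof.
by rewrite mulrBr binom_term_ratio -!natr1; ring.
Qed.

End BinomialTerm.

Section BinomialTermOrder.
Variables (R : realDomainType) (p : R).
Hypotheses (p_ge0 : 0 <= p) (p_lt1 : p < 1).

Lemma binom_term_ge0 n i : 0 <= binom_term p n i.
Proof. by rewrite /binom_term !mulr_ge0 ?exprn_ge0 ?ler0n // subr_ge0 ltW. Qed.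

Let weight_gt0 i : 0 < (i.+1)%:R * (1 - p).
Proof. by rewrite mulr_gt0 ?ltr0Sn ?subr_gt0. Qed.

Lemma binom_term_nonincr n i :
  (n.+1)%:R * p <= (i.+1)%:R -> binom_term p n i.+1 <= binom_term p n i.
Proof.
move=> le_mean_i; rewrite -subr_le0 -(pmulr_rle0 _ (weight_gt0 i)) binom_term_diff.
by rewrite mulr_le0_ge0 ?binom_term_ge0 // subr_le0.
Qed.

Lemma binom_term_nondecr n i :
  (i.+1)%:R <= (n.+1)%:R * p -> binom_term p n i <= binom_term p n i.+1.
Proof.
move=> le_i_mean; rewrite -subr_ge0 -(pmulr_rge0 _ (weight_gt0 i)) binom_term_diff.
by rewrite mulr_ge0 ?binom_term_ge0 // subr_ge0.
Qed.

End BinomialTermOrder.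

Definition trunc_binom_mean (R : comPzRingType) (m M : nat) (p : R) (n : nat) : R :=
  \sum_(m <= k < M.+1) (k.+1)%:R * binom_term p n k.+1.

Lemma trunc_binom_meanS (R : comPzRingType) (m M : nat) (p : R) n :
  trunc_binom_mean m M p n.+1 - trunc_binom_mean m M p n
  = p * \sum_(m <= k < M.+1) (k.+1)%:R * (binom_term p n k - binom_term p n k.+1).
Proof.
rewrite /trunc_binom_mean -sumrB mulr_sumr; apply: eq_bigr => k _.
by rewrite binom_termSS; ring.
Qed.

Lemma f_Sd_trunc_binom_mean (R : realFieldType) (m M : nat) (p : R) n :
  p != 0 -> f_Sd m M p n = 2 / p * trunc_binom_mean m M p n.
Proof.
move=> p_neq0; rewrite /f_Sd /trunc_binom_mean; case: n => [|n].
  by rewrite big1 ?mulr0 // => k _; rewrite /binom_term bin_small // !mul0r mulr0.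
rewrite !big_distrr /=; apply: eq_bigr => k _.
have bin_absorb : (n.+1)%:R * 'C(n, k)%:R = (k.+1)%:R * 'C(n.+1, k.+1)%:R :> R.
  by rewrite -!natrM mul_bin_diag.
rewrite /binom_term subSS exprS.
transitivity (2 * ((n.+1)%:R * 'C(n, k)%:R) * p ^+ k * (1 - p) ^+ (n - k)); first by ring.
by rewrite bin_absorb; field.
Qed.

Section MonotoneSteps.
Variables (R : realFieldType) (m M : nat) (p : R).
Hypotheses (p_gt0 : 0 < p) (p_lt1 : p < 1).

Lemma f_Sd_nondecr_step n : (n.+1)%:R * p <= (m.+1)%:R -> f_Sd m M p n <= f_Sd m M p n.+1.
Proof.
move=> le_mean_m; rewrite !f_Sd_trunc_binom_mean ?gt_eqF //.
apply: ler_wpM2l; first by rewrite divr_ge0 ?ltW.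
rewrite -subr_ge0 trunc_binom_meanS; apply: mulr_ge0; first exact: ltW.
rewrite big_nat; apply: sumr_ge0 => k /andP[le_mk _].
rewrite mulr_ge0 // subr_ge0; apply: (binom_term_nonincr (ltW p_gt0) p_lt1).
by rewrite (le_trans le_mean_m) ?ler_nat.
Qed.

Lemma f_Sd_nonincr_step n : (M.+1)%:R <= (n.+1)%:R * p -> f_Sd m M p n.+1 <= f_Sd m M p n.
Proof.
move=> le_M_mean; rewrite !f_Sd_trunc_binom_mean ?gt_eqF //.
apply: ler_wpM2l; first by rewrite divr_ge0 ?ltW.
rewrite -subr_le0 trunc_binom_meanS; apply: mulr_ge0_le0; first exact: ltW.
rewrite big_nat; apply: sumr_le0 => k /andP[_ lt_kM].
rewrite mulr_ge0_le0 // subr_le0; apply: (binom_term_nondecr (ltW p_gt0) p_lt1).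
by rewrite (le_trans _ le_M_mean) ?ler_nat.
Qed.

End MonotoneSteps.

Lemma ler_nat_divB1 (R : realFieldType) (p x : R) (n : nat) :
  0 < p -> (n%:R <= x / p - 1) = ((n.+1)%:R * p <= x).
Proof. by move=> p_gt0; rewrite lerBrDr ler_pdivlMr // natr1. Qed.

Lemma ler_divB1_nat (R : realFieldType) (p x : R) (n : nat) :
  0 < p -> (x / p - 1 <= n%:R) = (x <= (n.+1)%:R * p).
Proof. by move=> p_gt0; rewrite lerBlDr ler_pdivrMr // natr1. Qed.

Theorem theorem9 (R : realFieldType) (m M : nat) (p : R) :
  (m <= M)%N -> 0 < p -> p < 1 ->
  (forall a b : nat, (a <= b)%N -> b%:R <= (m.+1)%:R / p - 1 ->
     f_Sd m M p a <= f_Sd m M p b) /\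
  (forall a b : nat, (a <= b)%N -> (M.+1)%:R / p - 1 <= a%:R ->
     f_Sd m M p b <= f_Sd m M p a).
Proof.
move=> _ p_gt0 p_lt1; split=> a b le_ab.
- pose D := [pred n : nat | n%:R <= (m.+1)%:R / p - 1].
  have D_convex : {in D &, forall i j k, (i < k < j)%N -> k \in D}.
    by move=> i j _ Dj k /andP[_ /ltnW le_kj]; rewrite inE (le_trans _ Dj) ?ler_nat.
  move=> Db; apply: (Order.NatMonotonyTheory.nondecn_inP D_convex) => //; last first.
    by rewrite inE (le_trans _ Db) ?ler_nat.
  move=> i _; rewrite inE ler_nat_divB1 // => le_mean_m.
  by apply: f_Sd_nondecr_step => //; rewrite (le_trans _ le_mean_m) ?ler_wpM2r ?ler_nat ?ltW.
- pose D := [pred n : nat | (M.+1)%:R / p - 1 <= n%:R].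
  have D_convex : {in D &, forall i j k, (i < k < j)%N -> k \in D}.
    by move=> i j Di _ k /andP[/ltnW le_ik _]; rewrite inE (le_trans Di) ?ler_nat.
  move=> Da; apply: (Order.NatMonotonyTheory.nonincn_inP D_convex) => //.
    by move=> i; rewrite inE ler_divB1_nat // => le_M_i _; apply: f_Sd_nonincr_step.
  by rewrite inE (le_trans Da) ?ler_nat.
Qed.
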